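(* For every $\alpha\in(m,M)$, where $m=\inf_{n\ge1}b_n$ and $M=\sup_{n\ge1}b_n$, the limit $\lim_{x\to+\infty}\frac{D(x,\alpha)}{x}$ does not exist, where $D(x,\alpha)=\#\{n\in\mathbb Z:1\le n\le x,\ b_n\le\alpha\}$. That is, $(b_n)$ has no cumulative distribution function at any point of $(m,M)$.
   Context: Fix integers $p\ge 3$ and $2\le s<p$, and a set $A\subset\{0,1,\dots,p-1\}$ with $\#A=s$. Let $h:\{0,1,\dots,s-1\}\to A$ be the unique strictly increasing bijection. For a positive integer $n$ with base-$s$ expansion $n=\sum_{i=0}^k\varepsilon_i s^i$ ($\varepsilon_i\in\{0,\dots,s-1\}$, $\varepsilon_k\ne 0$), put $a_n=\sum_{i=0}^k h(\varepsilon_i)p^i$. Let $b_n=a_n/n^{\log_s p}$ for $n\ge1$. *)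

From Stdlib Require Import Reals Lia List.
From Coquelicot Require Import Coquelicot.
Open Scope R_scope.

(* a_n computed from the base-s expansion of n (fuel = n suffices since n/s < n):
   a(0) = 0, a(n) = h(n mod s) + p * a(n / s) for n >= 1.
   This equals sum_{i=0}^k h(eps_i) p^i where eps_k is the leading (nonzero) digit. *)
Fixpoint a_aux (s p : nat) (h : nat -> nat) (fuel n : nat) : nat :=
  match fuel with
  | O => O
  | S f => match n with
           | O => O
           | S _ => (h (Nat.modulo n s) + p * a_aux s p h f (Nat.div n s))%nat
           end
  end.

Definition a_seq (s p : nat) (h : nat -> nat) (n : nat) : nat := a_aux s p h n n.

Definition b_seq (s p : nat) (h : nat -> nat) (n : nat) : R :=
  INR (a_seq s p h n) / Rpower (INR n) (ln (INR p) / ln (INR s)).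

Definition D_count (s p : nat) (h : nat -> nat) (x alpha : R) : nat :=
  length (filter (fun n => if Rle_dec (b_seq s p h n) alpha then true else false)
                 (seq 1 (Z.to_nat (Int_part x)))).

From Stdlib Require Import Reals Lia List Lra ZArith.
From Coquelicot Require Import Coquelicot.
Open Scope R_scope.

(* Write g = log_s p.  The integers in [Q s^k, (Q + 1) s^k) are those whose base-s expansion
   begins with that of Q, so there a_n lies between p^k a_Q and p^k (a_Q + 1) while n^g lies
   between p^k Q^g and p^k (Q + 1)^g.  Hence a_Q / (Q + 1)^g <= b_n <= (a_Q + 1) / Q^g on the
   whole block, whatever k.  Starting from some b_N < alpha and some b_N' > alpha, the choices
   Q = N s^j - 1 and P = N' s^j with j large put every block of Q inside {b <= alpha} and every
   block of P inside {b > alpha}.  If D(x, alpha) / x tended to L, the frequencies of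
   {b <= alpha} on long blocks of Q and of P would both be close to L, but they are 1 and 0. *)

Section Digits.
Variables (s p : nat) (h : nat -> nat).
Hypothesis s_ge2 : (2 <= s)%nat.
Local Notation a := (a_seq s p h).
Local Open Scope nat_scope.

Lemma a_aux_fuel_irrelevant f1 f2 n : n <= f1 -> n <= f2 -> a_aux s p h f1 n = a_aux s p h f2 n.
Proof.
  revert f2 n; induction f1 as [|f1 IH]; intros f2 [|n] H1 H2; try lia;
    destruct f2 as [|f2]; try lia; try reflexivity.
  assert (S n / s < S n) by (apply Nat.div_lt; lia).
  simpl; rewrite (IH f2); lia.
Qed.

Lemma a_seq_digit q d : d < s -> 1 <= s * q + d -> a (s * q + d) = h d + p * a q.
Proof.
  intros Hd Hn; unfold a_seq.
  destruct (s * q + d) as [|n] eqn:E; [lia|].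
  assert (Hdiv : S n / s = q) by (symmetry; apply (Nat.div_unique _ _ _ d); lia).
  assert (Hmod : S n mod s = d) by (symmetry; apply (Nat.mod_unique _ _ q); lia).
  assert (q < S n) by nia.
  simpl a_aux at 1; rewrite Hdiv, Hmod, (a_aux_fuel_irrelevant n q); lia.
Qed.

Hypothesis h_lt_p : forall i, i < s -> h i < p.

Lemma a_seq_block k Q r : 1 <= Q -> r < s ^ k ->
  p ^ k * a Q <= a (Q * s ^ k + r) /\ a (Q * s ^ k + r) + 1 <= p ^ k * (a Q + 1).
Proof.
  revert r; induction k as [|k IH]; intros r HQ Hr.
  - rewrite Nat.pow_0_r in *; replace r with 0 by lia; rewrite Nat.mul_1_r, Nat.add_0_r; lia.
  - assert (Hsk : 1 <= s ^ k) by (apply Nat.neq_0_lt_0, Nat.pow_nonzero; lia).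
    assert (Hq : r / s < s ^ k) by (apply Nat.Div0.div_lt_upper_bound; simpl in Hr; lia).
    assert (Hd : r mod s < s) by (apply Nat.mod_upper_bound; lia).
    assert (E : Q * s ^ S k + r = s * (Q * s ^ k + r / s) + r mod s)
      by (rewrite (Nat.div_mod r s) at 1 by lia; simpl; nia).
    destruct (IH (r / s) HQ Hq) as [IH1 IH2].
    specialize (h_lt_p _ Hd).
    rewrite E, a_seq_digit, Nat.pow_succ_r' by nia; nia.
Qed.

Hypothesis h_incr : forall i j, i < j -> j < s -> h i < h j.

(* A nonzero last digit of N increases by one from N - 1 to N, and [h] is increasing with
   values below [p]; a last digit 0 comes from a carry, handled by induction on [N / s]. *)
Lemma a_seq_pred_le N : 1 <= N -> (p - 1) * a (N - 1) + h (s - 1) <= (p - 1) * a N.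
Proof.
  induction N as [N IH] using (well_founded_induction Wf_nat.lt_wf); intros HN.
  assert (Htop : h (s - 1) < p) by (apply h_lt_p; lia).
  assert (EN : N = s * (N / s) + N mod s) by (apply Nat.div_mod; lia).
  assert (Hd : N mod s < s) by (apply Nat.mod_upper_bound; lia).
  set (q := N / s) in *; set (d := N mod s) in *.
  destruct d as [|d].
  - assert (Hq : 1 <= q) by nia.
    assert (IHq := IH q ltac:(nia) Hq).
    assert (E1 : N - 1 = s * (q - 1) + (s - 1)) by nia.
    rewrite E1, EN, Nat.add_0_r, a_seq_digit by nia.
    rewrite <- (Nat.add_0_r (s * q)), a_seq_digit by nia.
    nia.
  - assert (Hh : h d < h (S d)) by (apply h_incr; lia).
    destruct (Nat.eq_dec N 1) as [->|HN1].
    + assert (Ha1 := a_seq_digit 0 1 ltac:(lia) ltac:(lia)).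
      rewrite Nat.mul_0_r in Ha1; simpl in Ha1 |- *.
      assert (h 0 < h 1) by (apply h_incr; lia).
      nia.
    + assert (E1 : N - 1 = s * q + d) by lia.
      rewrite E1, EN, !a_seq_digit by lia.
      nia.
Qed.

(* [(p - 1) a n + h (s - 1)] is exactly multiplied by [p] when a digit [s - 1] is appended to [n]. *)
Lemma a_seq_trailing N j : 1 <= N ->
  (p - 1) * a (N * s ^ j - 1) + h (s - 1) = p ^ j * ((p - 1) * a (N - 1) + h (s - 1)).
Proof.
  intros HN; induction j as [|j IH].
  - rewrite Nat.pow_0_r, Nat.mul_1_r, Nat.mul_1_l; reflexivity.
  - assert (Hsj : 1 <= s ^ j) by (apply Nat.neq_0_lt_0, Nat.pow_nonzero; lia).
    assert (E : N * s ^ S j - 1 = s * (N * s ^ j - 1) + (s - 1)) by (rewrite Nat.pow_succ_r'; nia).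
    rewrite E, a_seq_digit, Nat.pow_succ_r', <- Nat.mul_assoc, <- IH by nia.
    assert (h (s - 1) < p) by (apply h_lt_p; lia); nia.
Qed.

Lemma a_seq_trailing_le N j : 1 <= N -> a (N * s ^ j - 1) <= p ^ j * a N.
Proof.
  intros HN.
  assert (Hp : 2 <= p) by (pose proof (h_incr 0 1); pose proof (h_lt_p 1); lia).
  pose proof (a_seq_trailing N j HN); pose proof (a_seq_pred_le N HN).
  apply (Nat.mul_le_mono_pos_l _ _ (p - 1)); [lia|].
  assert (p ^ j * ((p - 1) * a (N - 1) + h (s - 1)) <= p ^ j * ((p - 1) * a N))
    by (apply Nat.mul_le_mono_l; assumption).
  nia.
Qed.

End Digits.

Lemma exp_mul_one_sub_le y t : y <= t -> exp y * (1 - t) <= 1.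
Proof.
  intros Hyt.
  destruct (Rle_dec t 1) as [Ht|Ht].
  - assert (exp y <= exp t)
      by (destruct (Rle_lt_or_eq_dec _ _ Hyt) as [H | ->]; [left; apply exp_increasing|right]; auto).
    assert (1 - t <= exp (- t)) by (pose proof (exp_ineq1_le (- t)); lra).
    apply Rle_trans with (exp t * exp (- t)).
    + apply Rmult_le_compat; lra || (left; apply exp_pos).
    + rewrite <- exp_plus, Rplus_opp_r, exp_0; lra.
  - pose proof (exp_pos y); nra.
Qed.

Lemma Rpower_bernoulli u v g : 0 < u <= v -> 0 <= g ->
  Rpower v g * (1 - g * ((v - u) / u)) <= Rpower u g.
Proof.
  intros [Hu Huv] Hg.
  assert (Hln : ln v - ln u <= (v - u) / u).
  { rewrite <- ln_div, <- (ln_exp ((v - u) / u)) by lra.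
    apply ln_le; [apply Rdiv_lt_0_compat; lra|].
    pose proof (exp_ineq1_le ((v - u) / u)).
    replace (v / u) with (1 + (v - u) / u) by (field; lra); lra. }
  assert (Hvu : Rpower v g = Rpower u g * exp (g * (ln v - ln u)))
    by (unfold Rpower; rewrite <- exp_plus; f_equal; ring).
  rewrite Hvu, Rmult_assoc.
  rewrite <- (Rmult_1_r (Rpower u g)) at 2.
  apply Rmult_le_compat_l; [left; apply exp_pos|].
  apply exp_mul_one_sub_le, Rmult_le_compat_l; assumption.
Qed.

Lemma Rpower_succ_bernoulli m g : (1 <= m)%nat -> 0 <= g ->
  Rpower (INR (m + 1)) g * (1 - g / INR m) <= Rpower (INR m) g.
Proof.
  intros Hm Hg.
  assert (0 < INR m) by (apply lt_0_INR; lia).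
  replace (g / INR m) with (g * ((INR (m + 1) - INR m) / INR m))
    by (rewrite plus_INR; simpl; field; lra).
  apply Rpower_bernoulli; [rewrite plus_INR; simpl; lra | assumption].
Qed.

Lemma Rpower_pow_ln_ratio x y k : 0 < x -> x <> 1 -> 0 < y ->
  Rpower (x ^ k) (ln y / ln x) = y ^ k.
Proof.
  intros Hx Hx1 Hy.
  assert (ln x <> 0) by (intros E; apply Hx1; rewrite <- (exp_ln x), E, exp_0 by lra; reflexivity).
  unfold Rpower; rewrite ln_pow by lra.
  rewrite <- (exp_ln (y ^ k)), ln_pow by (try apply pow_lt; lra).
  f_equal; field; assumption.
Qed.

Lemma exists_pow_gt s C : (2 <= s)%nat -> exists j, C < INR (s ^ j).
Proof.
  intros Hs; destruct (INR_unbounded C) as [j Hj].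
  exists j; apply Rlt_trans with (INR j); [lra|].
  apply lt_INR, Nat.pow_gt_lin_r; lia.
Qed.

Section Blocks.
Variables (s p : nat) (h : nat -> nat).
Hypothesis s_ge2 : (2 <= s)%nat.
Hypothesis s_le_p : (s <= p)%nat.
Hypothesis h_lt_p : forall i, (i < s)%nat -> (h i < p)%nat.
Local Notation a := (a_seq s p h).
Local Notation b := (b_seq s p h).
Local Notation g := (ln (INR p) / ln (INR s)).

Lemma ln_ratio_nonneg : 0 <= g.
Proof.
  assert (1 < INR s) by (apply lt_1_INR; lia).
  assert (INR s <= INR p) by (apply le_INR; lia).
  assert (0 < ln (INR s)) by (rewrite <- ln_1; apply ln_increasing; lra).
  assert (0 < ln (INR p)) by (rewrite <- ln_1; apply ln_increasing; lra).
  apply Rlt_le, Rdiv_lt_0_compat; assumption.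
Qed.

Lemma INR_pow_pos (m k : nat) : (1 <= m)%nat -> 0 < INR (m ^ k).
Proof. intros; apply lt_0_INR, Nat.neq_0_lt_0, Nat.pow_nonzero; lia. Qed.

Lemma Rpower_mul_pow_s Q k : (1 <= Q)%nat ->
  Rpower (INR (Q * s ^ k)) g = Rpower (INR Q) g * INR (p ^ k).
Proof.
  intros HQ.
  assert (1 < INR s) by (apply lt_1_INR; lia).
  assert (0 < INR Q) by (apply lt_0_INR; lia).
  assert (0 < INR p) by (apply lt_0_INR; lia).
  rewrite mult_INR, <- Rpower_mult_distr by (assumption || apply INR_pow_pos; lia).
  rewrite !pow_INR, Rpower_pow_ln_ratio by lra.
  reflexivity.
Qed.

Lemma b_seq_block_le Q k r x : (1 <= Q)%nat -> (r < s ^ k)%nat ->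
  INR (a Q) + 1 <= x * Rpower (INR Q) g -> b (Q * s ^ k + r) <= x.
Proof.
  intros HQ Hr Hx.
  destruct (a_seq_block s p h s_ge2 h_lt_p k Q r HQ Hr) as [_ Hup].
  apply le_INR in Hup; rewrite plus_INR, mult_INR, plus_INR in Hup; simpl in Hup.
  assert (Hpk := INR_pow_pos p k ltac:(lia)).
  assert (HRQ : 0 < Rpower (INR Q) g) by (unfold Rpower; apply exp_pos).
  assert (Hn : Rpower (INR Q) g * INR (p ^ k) <= Rpower (INR (Q * s ^ k + r)) g).
  { rewrite <- Rpower_mul_pow_s by assumption.
    apply Rle_Rpower_l; [apply ln_ratio_nonneg|split; [|apply le_INR; lia]].
    apply lt_0_INR; pose proof (INR_pow_pos s k ltac:(lia)); nia. }
  unfold b_seq; apply Rle_div_l; [unfold Rpower; apply exp_pos|].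
  assert (0 <= x) by (pose proof (pos_INR (a Q)); nra).
  nra.
Qed.

Lemma b_seq_block_gt Q k r x : (1 <= Q)%nat -> (r < s ^ k)%nat -> 0 <= x ->
  x * Rpower (INR (Q + 1)) g < INR (a Q) -> x < b (Q * s ^ k + r).
Proof.
  intros HQ Hr Hx0 Hx.
  destruct (a_seq_block s p h s_ge2 h_lt_p k Q r HQ Hr) as [Hlo _].
  apply le_INR in Hlo; rewrite mult_INR in Hlo.
  assert (Hpk := INR_pow_pos p k ltac:(lia)).
  assert (Hn : Rpower (INR (Q * s ^ k + r)) g <= Rpower (INR (Q + 1)) g * INR (p ^ k)).
  { rewrite <- Rpower_mul_pow_s by lia.
    apply Rle_Rpower_l; [apply ln_ratio_nonneg|split; [|apply le_INR; nia]].
    apply lt_0_INR; pose proof (INR_pow_pos s k ltac:(lia)); nia. }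
  unfold b_seq; apply Rlt_div_r; [unfold Rpower; apply exp_pos|].
  nra.
Qed.

Hypothesis h_incr : forall i j, (i < j)%nat -> (j < s)%nat -> (h i < h j)%nat.

(* [Q = N s^j - 1] rather than [N s^j], since [a (N s^j)] exceeds [p^j a N] when [h 0 > 0];
   here [a Q <= p^j a N] while [Q^g] is close to [(N s^j)^g = p^j N^g]. *)
Lemma exists_block_le N x : (1 <= N)%nat -> b N < x ->
  exists Q, (1 <= Q)%nat /\ INR (a Q) + 1 <= x * Rpower (INR Q) g.
Proof.
  intros HN Hb.
  set (W := Rpower (INR N) g); set (A := INR (a N)).
  assert (HW : 0 < W) by (unfold W, Rpower; apply exp_pos).
  assert (HA : 0 <= A) by apply pos_INR.
  assert (HAW : A < x * W) by (apply Rlt_div_l; assumption).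
  set (d := x * W - A).
  assert (Hd : 0 < d) by (unfold d; lra).
  assert (Hx : 0 < x) by nra.
  assert (Hg := ln_ratio_nonneg).
  assert (Hc : 0 <= 2 * x * W * g / d) by (apply Rdiv_le_0_compat; [apply Rmult_le_pos|]; nra).
  assert (Hd2 : 0 < 2 / d) by (apply Rdiv_lt_0_compat; lra).
  destruct (exists_pow_gt s (2 + 2 / d + 2 * x * W * g / d) s_ge2) as [j Hj].
  set (pj := INR (p ^ j)).
  assert (Hsj : INR (s ^ j) <= pj) by (apply le_INR, Nat.pow_le_mono_l; lia).
  assert (Hsj2 : (2 <= s ^ j)%nat) by (apply INR_lt; change (INR 1) with 1; lra).
  set (Q := (N * s ^ j - 1)%nat).
  assert (EQ : (Q + 1 = N * s ^ j)%nat) by (unfold Q; nia).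
  assert (HQ : (1 <= Q)%nat) by (unfold Q; nia).
  assert (HQsj : INR (s ^ j) <= INR Q + 1) by (rewrite <- S_INR, <- Nat.add_1_r, EQ; apply le_INR; nia).
  assert (HQ0 : 0 < INR Q) by (apply lt_0_INR; lia).
  exists Q; split; [assumption|].
  assert (HaQ : INR (a Q) <= pj * A).
  { unfold pj, A; rewrite <- mult_INR; apply le_INR, a_seq_trailing_le; assumption. }
  assert (HRQ : W * pj * (1 - g / INR Q) <= Rpower (INR Q) g).
  { unfold W, pj; rewrite <- Rpower_mul_pow_s, <- EQ by assumption.
    apply Rpower_succ_bernoulli; assumption. }
  set (G := g) in *; clearbody G.
  assert (Hsmall : x * W * (G / INR Q) <= d / 2).
  { replace (x * W * (G / INR Q)) with (2 * x * W * G / d * (d / 2) / INR Q) by (field; lra).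
    apply Rle_div_l; [lra|].
    rewrite (Rmult_comm (d / 2)); apply Rmult_le_compat_r; lra. }
  assert (Hbig : 1 <= pj * (d / 2)).
  { replace 1 with (2 / d * (d / 2)) by (field; lra).
    apply Rmult_le_compat_r; lra. }
  apply Rle_trans with (x * (W * pj * (1 - G / INR Q))); [|apply Rmult_le_compat_l; lra].
  replace (x * (W * pj * (1 - G / INR Q))) with (pj * (A + d) - pj * (x * W * (G / INR Q)))
    by (unfold d; ring).
  nra.
Qed.

Lemma exists_block_gt N x : (1 <= N)%nat -> 0 <= x -> x < b N ->
  exists P, (1 <= P)%nat /\ x * Rpower (INR (P + 1)) g < INR (a P).
Proof.
  intros HN Hx Hb.
  set (W := Rpower (INR N) g); set (A := INR (a N)).
  assert (HW : 0 < W) by (unfold W, Rpower; apply exp_pos).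
  assert (HAW : x * W < A) by (apply Rlt_div_r; assumption).
  set (d := A - x * W).
  assert (Hd : 0 < d) by (unfold d; lra).
  assert (Hg := ln_ratio_nonneg).
  assert (HAg : 0 <= A * g / d) by (apply Rdiv_le_0_compat; [apply Rmult_le_pos; [apply pos_INR|]|]; lra).
  destruct (exists_pow_gt s (1 + g + A * g / d) s_ge2) as [j Hj].
  set (pj := INR (p ^ j)).
  assert (Hpj : 0 < pj) by (apply INR_pow_pos; lia).
  set (P := (N * s ^ j)%nat).
  assert (HPsj : INR (s ^ j) <= INR P) by (apply le_INR; unfold P; nia).
  assert (HP : (1 <= P)%nat) by (apply INR_le; change (INR 1) with 1; lra).
  assert (HP0 : 0 < INR P) by (apply lt_0_INR; lia).
  exists P; split; [assumption|].
  assert (HaP : pj * A <= INR (a P)).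
  { destruct (a_seq_block s p h s_ge2 h_lt_p j N 0 HN) as [Hlo _];
      [apply Nat.neq_0_lt_0, Nat.pow_nonzero; lia|].
    rewrite Nat.add_0_r in Hlo; apply le_INR in Hlo; rewrite mult_INR in Hlo; assumption. }
  assert (HRP : Rpower (INR (P + 1)) g * (1 - g / INR P) <= W * pj).
  { unfold W, pj; rewrite <- Rpower_mul_pow_s by assumption.
    apply Rpower_succ_bernoulli; assumption. }
  set (G := g) in *; clearbody G.
  set (e := 1 - G / INR P).
  assert (He : 0 < e) by (assert (G / INR P < 1) by (apply Rlt_div_l; lra); unfold e; lra).
  assert (HAe : x * W < A * e).
  { assert (A * G < INR P * d) by (apply Rlt_div_l; lra).
    assert (A * G / INR P < d) by (apply Rlt_div_l; [lra | rewrite (Rmult_comm d); assumption]).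
    unfold e; replace (A * (1 - G / INR P)) with (A - A * G / INR P) by (field; lra).
    unfold d in *; lra. }
  apply (Rmult_lt_reg_r e); [assumption|].
  apply Rle_lt_trans with (x * (W * pj)); [rewrite Rmult_assoc; apply Rmult_le_compat_l; assumption|].
  apply Rlt_le_trans with (pj * A * e); [nra|].
  apply Rmult_le_compat_r; lra.
Qed.
End Blocks.

Lemma count_seq_all (f : nat -> bool) st m :
  (forall r, (r < m)%nat -> f (st + r)%nat = true) -> length (filter f (seq st m)) = m.
Proof.
  intros Hf; rewrite forallb_filter_id, length_seq; [reflexivity|].
  apply forallb_forall; intros n Hn; apply in_seq in Hn.
  replace n with (st + (n - st))%nat by lia; apply Hf; lia.
Qed.

Lemma count_seq_none (f : nat -> bool) st m :
  (forall r, (r < m)%nat -> f (st + r)%nat = false) -> length (filter f (seq st m)) = 0%nat.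
Proof.
  intros Hf; pose proof (filter_length f (seq st m)) as E.
  rewrite (count_seq_all (fun n => negb (f n))), length_seq in E by (intros r Hr; rewrite Hf; auto).
  lia.
Qed.

Lemma Rabs_increment_ratio_le L eps c T x D1 D2 : 0 < x -> 0 < T ->
  Rabs (D1 / x - L) < eps -> Rabs (D2 / (x + T) - L) < eps -> D2 = D1 + c * T ->
  Rabs (c - L) * T <= eps * (2 * x + T).
Proof.
  intros Hx HT H1 H2 E.
  assert (E1 : D1 - L * x = (D1 / x - L) * x) by (field; lra).
  assert (E2 : D2 - L * (x + T) = (D2 / (x + T) - L) * (x + T)) by (field; lra).
  assert (B1 : Rabs (D1 - L * x) <= eps * x)
    by (rewrite E1, Rabs_mult, (Rabs_pos_eq x) by lra; apply Rmult_le_compat_r; lra).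
  assert (B2 : Rabs (D2 - L * (x + T)) <= eps * (x + T))
    by (rewrite E2, Rabs_mult, (Rabs_pos_eq (x + T)) by lra; apply Rmult_le_compat_r; lra).
  replace (Rabs (c - L) * T) with (Rabs ((D2 - L * (x + T)) - (D1 - L * x)))
    by (rewrite <- (Rabs_pos_eq T) at 2 by lra; rewrite <- Rabs_mult; f_equal; rewrite E; ring).
  pose proof (Rabs_triang (D2 - L * (x + T)) (- (D1 - L * x))) as Ht; rewrite Rabs_Ropp in Ht.
  unfold Rminus in *; lra.
Qed.

Lemma is_lim_unit_interval_finite (f : R -> R) l :
  (forall x, 0 < x -> 0 <= f x <= 1) -> is_lim f p_infty l -> is_finite l.
Proof.
  intros Hf Hl; apply is_lim_spec in Hl.
  destruct l as [L| |]; simpl in Hl; [reflexivity| |].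
  - destruct (Hl 1) as [M HM].
    specialize (HM (Rabs M + 1) ltac:(pose proof (Rle_abs M); lra)).
    specialize (Hf (Rabs M + 1) ltac:(pose proof (Rabs_pos M); lra)); lra.
  - destruct (Hl 0) as [M HM].
    specialize (HM (Rabs M + 1) ltac:(pose proof (Rle_abs M); lra)).
    specialize (Hf (Rabs M + 1) ltac:(pose proof (Rabs_pos M); lra)); lra.
Qed.

Lemma Inf_seq_lt_ex (u : nat -> R) (x : R) : Rbar_lt (Inf_seq u) x -> exists n, u n < x.
Proof.
  rewrite Inf_opp_sup; intros H.
  rewrite <- (Rbar_opp_involutive (Finite x)), Rbar_opp_lt in H.
  destruct (proj1 (Sup_seq_minor_lt _ _) H) as [n Hn].
  exists n; simpl in Hn; lra.
Qed.

Section Counting.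
Variables (s p : nat) (h : nat -> nat) (alpha : R).
Local Notation F := (fun n => if Rle_dec (b_seq s p h n) alpha then true else false).
Local Notation D x := (D_count s p h x alpha).

Lemma D_count_INR n : D (INR n) = length (filter F (seq 1 n)).
Proof. unfold D_count; rewrite Int_part_INR, Nat2Z.id; reflexivity. Qed.

Lemma D_count_INR_add n T : D (INR (n + T)) = (D (INR n) + length (filter F (seq (1 + n) T)))%nat.
Proof. rewrite !D_count_INR, seq_app, filter_app, length_app; reflexivity. Qed.

Lemma D_count_le x : 0 < x -> INR (D x) <= x.
Proof.
  intros Hx; destruct (base_Int_part x) as [Hlo Hhi].
  assert (Hz : (0 <= Int_part x)%Z) by (apply Z.lt_succ_r, lt_IZR; rewrite succ_IZR; lra).
  unfold D_count; eapply Rle_trans; [apply le_INR, filter_length_le|].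
  rewrite length_seq, INR_IZR_INZ, Z2Nat.id by assumption; assumption.
Qed.

Lemma window_frequency_close L eps M Q T c :
  (forall x, M < x -> Rabs (INR (D x) / x - L) < eps) -> (1 <= Q)%nat -> Rabs M + 1 < INR T ->
  length (filter F (seq (Q * T) T)) = c -> Rabs (INR c / INR T - L) <= eps * (2 * INR Q + 1).
Proof.
  intros Hlim HQ HT Hc.
  assert (HM := Rle_abs M); assert (HM0 := Rabs_pos M).
  assert (HQR : 1 <= INR Q) by (apply (le_INR 1); assumption).
  assert (HT0 : 0 < INR T) by lra.
  assert (HT1 : (1 <= T)%nat) by (apply INR_le; change (INR 1) with 1; lra).
  set (x := (Q * T - 1)%nat).
  assert (Hx : INR x + 1 = INR Q * INR T) by (unfold x; rewrite minus_INR, mult_INR by nia; simpl; ring).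
  assert (HTQ : INR T <= INR Q * INR T) by nra.
  assert (HD : D (INR x + INR T) = (D (INR x) + c)%nat).
  { rewrite <- plus_INR, D_count_INR_add, <- Hc; replace (1 + x)%nat with (Q * T)%nat by (unfold x; nia); reflexivity. }
  assert (Hx0 : 0 < INR x) by lra.
  assert (Hinc := Rabs_increment_ratio_le L eps (INR c / INR T) (INR T) (INR x)
    (INR (D (INR x))) (INR (D (INR x + INR T))) Hx0 HT0
    (Hlim (INR x) ltac:(lra)) (Hlim (INR x + INR T) ltac:(lra))).
  assert (Hle : Rabs (INR c / INR T - L) * INR T <= eps * (2 * INR x + INR T))
    by (apply Hinc; rewrite HD, plus_INR; field; lra).
  assert (Heps : 0 <= eps)
    by (eapply Rle_trans; [apply Rabs_pos|]; left; apply (Hlim (INR x)); lra).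
  apply (Rmult_le_reg_r (INR T)); [assumption|].
  apply (Rle_trans _ _ _ Hle); nra.
Qed.

Lemma D_ratio_unit_interval x : 0 < x -> 0 <= INR (D x) / x <= 1.
Proof.
  intros Hx; split.
  - apply Rdiv_le_0_compat; [apply pos_INR | assumption].
  - apply Rle_div_l; [assumption|]; rewrite Rmult_1_l; apply D_count_le; assumption.
Qed.

Hypothesis s_ge2 : (2 <= s)%nat.

Lemma D_ratio_no_finite_limit Q P (L : R) : (1 <= Q)%nat -> (1 <= P)%nat ->
  (forall k r, (r < s ^ k)%nat -> b_seq s p h (Q * s ^ k + r) <= alpha) ->
  (forall k r, (r < s ^ k)%nat -> alpha < b_seq s p h (P * s ^ k + r)) ->
  ~ is_lim (fun x => INR (D x) / x) p_infty L.
Proof.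
  intros HQ HP Hlow Hhigh Hl; apply is_lim_spec in Hl; simpl in Hl.
  assert (HQR : 0 <= INR Q) by apply pos_INR; assert (HPR : 0 <= INR P) by apply pos_INR.
  set (eps := 1 / (4 * (INR Q + INR P + 1))).
  assert (Heps : 0 < eps) by (unfold eps; apply Rdiv_lt_0_compat; lra).
  destruct (Hl (mkposreal eps Heps)) as [M HM]; simpl in HM.
  destruct (exists_pow_gt s (Rabs M + 1) s_ge2) as [k Hk].
  assert (HT : 0 < INR (s ^ k)) by (pose proof (Rabs_pos M); lra).
  assert (Hone : Rabs (INR (s ^ k) / INR (s ^ k) - L) <= eps * (2 * INR Q + 1)).
  { apply (window_frequency_close L eps M Q (s ^ k) (s ^ k) HM HQ Hk), count_seq_all.
    intros r Hr; destruct Rle_dec as [_|Hn]; [reflexivity|]; exfalso; apply Hn, Hlow, Hr. }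
  assert (Hzero : Rabs (INR 0 / INR (s ^ k) - L) <= eps * (2 * INR P + 1)).
  { apply (window_frequency_close L eps M P (s ^ k) 0 HM HP Hk), count_seq_none.
    intros r Hr; destruct Rle_dec as [Hn|_]; [|reflexivity]; exfalso.
    apply (Rlt_not_le _ _ (Hhigh k r Hr) Hn). }
  replace (INR (s ^ k) / INR (s ^ k)) with 1 in Hone by (field; lra).
  replace (INR 0 / INR (s ^ k)) with 0 in Hzero by (simpl; field; lra).
  assert (Hsum : eps * (2 * INR Q + 1) + eps * (2 * INR P + 1) = 1 / 2) by (unfold eps; field; lra).
  assert (Htri : Rabs 1 <= Rabs (1 - L) + Rabs (0 - L)).
  { rewrite <- (Rabs_Ropp (0 - L)); replace 1 with ((1 - L) + - (0 - L)) at 1 by ring.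
    apply Rabs_triang. }
  rewrite Rabs_R1 in Htri; lra.
Qed.
End Counting.

Lemma b_seq_nonneg s p h n : 0 <= b_seq s p h n.
Proof. apply Rdiv_le_0_compat; [apply pos_INR | unfold Rpower; apply exp_pos]. Qed.

Theorem theorem3 (p s : nat) (A : list nat) (h : nat -> nat)
  (Hp : (3 <= p)%nat) (Hs2 : (2 <= s)%nat) (Hsp : (s < p)%nat)
  (HAnd : NoDup A) (HAlen : length A = s) (HAp : forall x, In x A -> (x < p)%nat)
  (HhA : forall i, (i < s)%nat -> In (h i) A)
  (Hhinc : forall i j, (i < j)%nat -> (j < s)%nat -> (h i < h j)%nat)
  (alpha : R)
  (Hm : Rbar_lt (Inf_seq (fun k => b_seq s p h (S k))) (Finite alpha))
  (HM : Rbar_lt (Finite alpha) (Sup_seq (fun k => b_seq s p h (S k)))) :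
  ~ ex_lim (fun x => INR (D_count s p h x alpha) / x) p_infty.
Proof.
  assert (Hhp : forall i, (i < s)%nat -> (h i < p)%nat) by (intros; apply HAp, HhA; assumption).
  destruct (Inf_seq_lt_ex _ _ Hm) as [n0 Hn0].
  destruct (proj1 (Sup_seq_minor_lt _ _) HM) as [n1 Hn1]; simpl in Hn1.
  assert (Halpha : 0 <= alpha) by (pose proof (b_seq_nonneg s p h (S n0)); lra).
  destruct (exists_block_le s p h Hs2 ltac:(lia) Hhp Hhinc (S n0) alpha ltac:(lia) Hn0)
    as [Q [HQ HQb]].
  destruct (exists_block_gt s p h Hs2 ltac:(lia) Hhp (S n1) alpha ltac:(lia) Halpha Hn1)
    as [P [HP HPb]].
  intros [l Hl].
  assert (Hfin := is_lim_unit_interval_finite _ _ (D_ratio_unit_interval s p h alpha) Hl).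
  destruct l as [L| |]; try discriminate.
  apply (D_ratio_no_finite_limit s p h alpha Hs2 Q P L HQ HP); [| |assumption].
  - intros k r Hr; apply (b_seq_block_le s p h Hs2 ltac:(lia) Hhp); assumption.
  - intros k r Hr; apply (b_seq_block_gt s p h Hs2 ltac:(lia) Hhp); assumption.
Qed.
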